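(* Let $G\in\mathscr M_+([0,\infty))$ have no atoms in $(0,\infty)$ (i.e. $G(\{x\})=0$ for all $x>0$) and satisfy $\int_{(0,\infty)}\frac{G(x)}{\sqrt x}dx<\infty$. Then for every admissible family $(\varphi_\varepsilon)$, $$\lim_{\varepsilon\to0}\mathscr Q_3^{(2)}(\varphi_\varepsilon,G)=0.$$
   Context: $\mathscr M_+([0,\infty))$ is the set of nonnegative finite Radon measures on $[0,\infty)$; we write $\int_A\varphi(x)G(x)dx$ for $\int_A\varphi\,dG$. $C^1_b([0,\infty))$ denotes bounded $C^1$ functions with bounded derivative. For continuous $\varphi$: $\Lambda(\varphi)(x,y)=\varphi(x+y)+\varphi(|x-y|)-2\varphi(\max\{x,y\})$ and $\mathscr Q_3^{(2)}(\varphi,G)=\iint_{(0,\infty)^2}\frac{\Lambda(\varphi)(x,y)}{\sqrt{xy}}G(x)G(y)dxdy$. Admissible family: $(\varphi_\varepsilon)_{\varepsilon>0}$ with $\varphi_\varepsilon(x)=\varphi(x/\varepsilon)$, where $\varphi\in C^1_b([0,\infty))$ is nonnegative and convex with $\varphi(0)=1$ and $\lim_{x\to\infty}\sqrt x\,\varphi(x)=0$. *)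

From HB Require Import structures.
From mathcomp Require Import all_boot all_order all_algebra.
From mathcomp Require Import all_classical all_reals all_analysis.
Set Implicit Arguments. Unset Strict Implicit. Unset Printing Implicit Defensive.
Import Order.TTheory GRing.Theory Num.Theory.
Import numFieldNormedType.Exports.
Local Open Scope classical_set_scope.
Local Open Scope ring_scope.

Definition Lambda (R : realType) (phi : R -> R) (x y : R) : R :=
  phi (x + y) + phi `|x - y| - 2 * phi (Num.max x y).

Definition Q32 (R : realType) (G : {finite_measure set R -> \bar R}) (phi : R -> R) : R :=
  fine (\int[(G \x G)%E]_(p in (`]0%R, +oo[%classic : set R) `*` (`]0%R, +oo[%classic : set R))
          ((Lambda phi p.1 p.2 / Num.sqrt (p.1 * p.2))%:E))%E.

(* phi in C^1_b([0,oo)): bounded on [0,oo), continuous on [0,oo), differentiable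
   on (0,oo) with a derivative that extends to a bounded continuous function on
   [0,oo) (so the one-sided derivative at 0 exists and equals dphi 0). *)
Definition C1b_half (R : realType) (phi : R -> R) : Prop :=
  (exists M : R, forall x, 0 <= x -> `|phi x| <= M) /\
  {within `[0%R, +oo[%classic, continuous phi} /\
  (forall x : R, 0 < x -> derivable phi x 1) /\
  exists dphi : R -> R,
    {within `[0%R, +oo[%classic, continuous dphi} /\
    (exists M : R, forall x, 0 <= x -> `|dphi x| <= M) /\
    (forall x : R, 0 < x -> derive1 phi x = dphi x) /\
    (fun h : R => h^-1 * (phi h - phi 0)) @ 0^'+ --> dphi 0.

Definition convex_half (R : realType) (phi : R -> R) : Prop :=
  forall x y t : R, 0 <= x -> 0 <= y -> 0 <= t <= 1 ->
    phi (t * x + (1 - t) * y) <= t * phi x + (1 - t) * phi y.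

(* profile of an admissible family phi_eps(x) = phi(x/eps) *)
Definition admissible_profile (R : realType) (phi : R -> R) : Prop :=
  C1b_half phi /\ (forall x, 0 <= x -> 0 <= phi x) /\ convex_half phi /\
  phi 0 = 1 /\ (fun x => Num.sqrt x * phi x) @ +oo --> (0 : R).

Definition rescale (R : realType) (phi : R -> R) (eps : R) : R -> R :=
  fun x => phi (x / eps).

(* For fixed x <> y in (0, oo), every argument of phi in Lambda(phi_eps)(x, y)
   tends to +oo as eps -> 0, and phi vanishes at infinity because
   sqrt x * phi x does; so the integrand of Q_3^(2) tends to 0 off the
   diagonal, which is (G x G)-null since G has no atoms in (0, oo).  The
   integrand is dominated by 4 sup|phi| / sqrt(x y), whose (G x G)-integral is
   (int G(x) / sqrt x dx)^2 < oo, and dominated convergence concludes. *)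
From HB Require Import structures.
From mathcomp Require Import all_boot all_order all_algebra.
From mathcomp Require Import all_classical all_reals all_analysis.
From mathcomp Require Import measurable_realfun ring.
Set Implicit Arguments. Unset Strict Implicit. Unset Printing Implicit Defensive.
Import Order.TTheory GRing.Theory Num.Theory.
Import numFieldNormedType.Exports.
Local Open Scope classical_set_scope.
Local Open Scope ring_scope.

Section profile_limits.
Variable R : realType.
Implicit Types (psi : R -> R) (x y a : R).

Lemma cvgy0_of_sqrtrM psi :
  (fun x => Num.sqrt x * psi x) @ +oo --> 0 -> psi @ +oo --> 0.
Proof.
move=> /cvgrPdist_lt sqrt_psi0; apply/cvgrPdist_lt => e e0.
near=> x; have x1 : 1 <= x by near: x; exact: nbhs_pinfty_ge.
have : `|0 - Num.sqrt x * psi x| < e by near: x; exact: sqrt_psi0.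
apply: le_lt_trans; rewrite !sub0r !normrN normrM -[leLHS]mul1r ler_wpM2r //.
by rewrite ger0_norm ?sqrtr_ge0 // -sqrtr1 ler_sqrt.
Unshelve. all: by end_near. Qed.

Lemma rescale_cvg0 psi a : psi @ +oo --> 0 -> 0 < a ->
  rescale psi e a @[e --> 0^'+] --> 0.
Proof.
move=> psi0 a0; apply: (cvg_comp _ _ _ psi0).
have -> : (fun e => a / e) = (fun e => (e / a)^-1).
  by apply/funext => e; rewrite invf_div.
apply/cvgrVy; first by near=> e; rewrite divr_gt0.
rewrite -[X in _ --> X](mul0r a^-1); apply: cvgMr_tmp.
exact: cvg_at_right_filter.
Unshelve. all: by end_near. Qed.

Lemma Lambda_rescale_cvg0 psi x y : psi @ +oo --> 0 -> 0 < x -> 0 < y -> x != y ->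
  Lambda (rescale psi e) x y @[e --> 0^'+] --> 0.
Proof.
move=> psi0 x0 y0 xy.
have := cvgB (cvgD (rescale_cvg0 psi0 (addr_gt0 x0 y0)) (rescale_cvg0 psi0 _))
  (cvgMl_tmp (a := 2) (rescale_cvg0 psi0 (_ : 0 < Num.max x y))).
rewrite addr0 mulr0 subr0; apply; first by rewrite normr_gt0 subr_eq0.
by rewrite lt_max x0.
Qed.

Lemma normr_Lambda_le psi M x y : (forall t, 0 <= t -> `|psi t| <= M) ->
  0 <= x -> 0 <= y -> `|Lambda psi x y| <= 4 * M.
Proof.
move=> psiM x0 y0; rewrite /Lambda.
have -> : 4 * M = M + M + 2 * M by ring.
rewrite (le_trans (ler_normB _ _)) // lerD ?(le_trans (ler_normD _ _)) ?lerD //.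
- exact/psiM/addr_ge0.
- exact/psiM.
rewrite normrM ger0_norm // ler_wpM2l //; apply: psiM.
by rewrite le_max x0.
Qed.

Lemma normr_rescale_le psi M e t : (forall t, 0 <= t -> `|psi t| <= M) ->
  0 < e -> 0 <= t -> `|rescale psi e t| <= M.
Proof. by move=> psiM e0 t0; apply/psiM/divr_ge0/ltW. Qed.

End profile_limits.

Section measurability.
Variable R : realType.
Local Notation nonneg := (`[0%R, +oo[%classic : set R).
Local Notation pos := (`]0%R, +oo[%classic : set R).
Local Notation quadrant := (pos `*` pos).

Lemma measurable_quadrant : measurable quadrant.
Proof. by apply: measurableX; exact: measurable_itv. Qed.

Lemma quadrantP (p : R * R) : quadrant p -> 0 < p.1 /\ 0 < p.2.
Proof. by case; rewrite /= !in_itv /= !andbT. Qed.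

Let measurable_fun_fst : measurable_fun quadrant (fun p : R * R => p.1).
Proof. exact: measurable_funS measurableT (@subsetT _ _) measurable_fst. Qed.

Let measurable_fun_snd : measurable_fun quadrant (fun p : R * R => p.2).
Proof. exact: measurable_funS measurableT (@subsetT _ _) measurable_snd. Qed.

Lemma measurable_comp_in d (T : measurableType d) (D : set T) (A : set R)
    (psi : R -> R) (g : T -> R) :
  measurable A -> measurable_fun A psi -> measurable_fun D g ->
  (forall t, D t -> A (g t)) -> measurable_fun D (psi \o g).
Proof.
move=> mA mpsi mg gDA; apply: measurable_comp mA _ mpsi mg.
by move=> _ [t Dt <-]; exact: gDA.
Qed.

Lemma measurable_fun_rescale (psi : R -> R) (e : R) :
  measurable_fun nonneg psi -> 0 < e -> measurable_fun nonneg (rescale psi e).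
Proof.
move=> mpsi e0; apply: measurable_comp_in mpsi _ _ => //.
  by apply: measurable_funM => //; exact: measurable_cst.
by move=> t; rewrite /= !in_itv /= !andbT => t0; rewrite divr_ge0 // ltW.
Qed.

Lemma measurable_fun_Lambda (psi : R -> R) : measurable_fun nonneg psi ->
  measurable_fun quadrant (fun p => Lambda psi p.1 p.2).
Proof.
move=> mpsi.
have comp_nonneg (g : R * R -> R) : measurable_fun quadrant g ->
    (forall p, quadrant p -> 0 <= g p) -> measurable_fun quadrant (psi \o g).
  move=> mg g0; apply: measurable_comp_in mpsi mg _ => // p /g0.
  by rewrite /= in_itv /= andbT.
apply: measurable_funB; first apply: measurable_funD.
- apply: comp_nonneg; first exact: measurable_funD.
  by move=> p /quadrantP[p1 p2]; rewrite addr_ge0 // ltW.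
- apply: comp_nonneg => //.
  by apply: measurableT_comp; [exact: normr_measurable|exact: measurable_funB].
apply: measurable_funM; first exact: measurable_cst.
apply: comp_nonneg; first exact: measurable_maxr.
by move=> p /quadrantP[p1 p2]; rewrite le_max ltW.
Qed.

Lemma measurable_fun_invsqrt : measurable_fun pos (fun t : R => (Num.sqrt t)^-1).
Proof.
apply: open_continuous_measurable_fun; first exact: interval_open.
move=> t; rewrite inE /= in_itv /= andbT => t0.
apply: continuous_comp; first exact: sqrt_continuous.
by apply: inv_continuous; rewrite gt_eqF // sqrtr_gt0.
Qed.

Lemma measurable_fun_invsqrtM :
  measurable_fun quadrant (fun p : R * R => (Num.sqrt (p.1 * p.2))^-1).
Proof.
apply: measurable_comp_in measurable_fun_invsqrt _ _ => //.
  exact: measurable_funM.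
by move=> p /quadrantP[p1 p2]; rewrite /= in_itv /= mulr_gt0.
Qed.

End measurability.

Section product_integral.
Local Open Scope ereal_scope.
Context d1 d2 (T1 : measurableType d1) (T2 : measurableType d2) (R : realType).
Variables (m1 : {sigma_finite_measure set T1 -> \bar R})
  (m2 : {sigma_finite_measure set T2 -> \bar R}).

Lemma ge0_integral_setXM (A : set T1) (B : set T2) (f : T1 -> R) (g : T2 -> R) :
  measurable A -> measurable B -> measurable_fun A f -> measurable_fun B g ->
  (forall x, A x -> (0 <= f x)%R) -> (forall y, B y -> (0 <= g y)%R) ->
  \int[m1 \x m2]_(z in A `*` B) (f z.1 * g z.2)%:E =
  \int[m1]_(x in A) (f x)%:E * \int[m2]_(y in B) (g y)%:E.
Proof.
move=> mA mB mf mg f0 g0.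
set F := (EFin \o f) \_ A; set H := (EFin \o g) \_ B.
have mF : measurable_fun setT F.
  by apply/(measurable_restrictT _ _).1 => //; exact/measurable_EFinP.
have mH : measurable_fun setT H.
  by apply/(measurable_restrictT _ _).1 => //; exact/measurable_EFinP.
have F0 x : 0 <= F x by rewrite /F /patch; case: ifPn => // /set_mem /f0.
have H0 y : 0 <= H y by rewrite /H /patch; case: ifPn => // /set_mem /g0.
rewrite integral_mkcond.
have -> : ((fun z => (f z.1 * g z.2)%:E) \_ (A `*` B)) = fun z => F z.1 * H z.2.
  apply/funext => -[x y]; rewrite /F /H /patch in_setX /=.
  by case: (x \in A); case: (y \in B); rewrite ?mul0e ?mule0.
rewrite fubini_tonelli1 //=; last 2 first.
- by apply: emeasurable_funM; apply: measurableT_comp.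
- by move=> z; rewrite mule_ge0.
rewrite /fubini_F /=.
under eq_integral => x _ do rewrite ge0_integralZl //.
by rewrite ge0_integralZr // ?integral_ge0 // -!integral_mkcond.
Qed.

End product_integral.

Section quadrant_integrals.
Local Open Scope ereal_scope.
Variable R : realType.
Local Notation pos := (`]0%R, +oo[%classic : set R).
Local Notation quadrant := (pos `*` pos).

Lemma integrable_invsqrtM (m : {sigma_finite_measure set R -> \bar R}) :
  \int[m]_(x in pos) ((Num.sqrt x)^-1)%:E < +oo ->
  (m \x m).-integrable quadrant (fun p => ((Num.sqrt (p.1 * p.2))^-1)%:E).
Proof.
move=> m_fin; apply/integrableP; split.
  by apply/measurable_EFinP; exact: measurable_fun_invsqrtM.
under eq_integral => p /[1!inE] /quadrantP[p1 p2].
  rewrite gee0_abs ?lee_fin ?invr_ge0 ?sqrtr_ge0 // sqrtrM ?ltW // invfM.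
over.
have invsqrt_ge0 (x : R) : pos x -> (0 <= (Num.sqrt x)^-1)%R.
  by rewrite invr_ge0 sqrtr_ge0.
rewrite (ge0_integral_setXM m m _ _ (@measurable_fun_invsqrt R)
  (@measurable_fun_invsqrt R) invsqrt_ge0 invsqrt_ge0) //.
have J_fin : \int[m]_(x in pos) ((Num.sqrt x)^-1)%:E \is a fin_num.
  rewrite ge0_fin_numE //; apply: integral_ge0 => x _.
  by rewrite lee_fin invr_ge0 sqrtr_ge0.
by rewrite -(fineK J_fin) -EFinM ltry.
Qed.

Lemma measurable_diagonal (A : set R) :
  measurable A -> measurable ((A `*` A) `&` [set p | p.1 == p.2]).
Proof.
move=> mA; apply: (measurable_fun_eqr _ _ (measurableX mA mA)) => //.
  exact: measurable_funS measurableT (@subsetT _ _) measurable_fst.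
exact: measurable_funS measurableT (@subsetT _ _) measurable_snd.
Qed.

Lemma product_measure_diagonal (m1 : {measure set R -> \bar R})
    (m2 : {sigma_finite_measure set R -> \bar R}) (A : set R) :
  measurable A -> (forall x, A x -> m2 [set x] = 0) ->
  (m1 \x m2) ((A `*` A) `&` [set p | p.1 == p.2]) = 0.
Proof.
move=> mA m2A.
rewrite /product_measure1 /=; apply: integral0_eq => x _ /=.
have [Ax|nAx] := pselect (A x).
  apply/eqP; rewrite eq_le measure_ge0 andbT -(m2A _ Ax).
  apply: le_measure; rewrite ?inE.
  - exact: measurable_xsection (measurable_diagonal mA).
  - exact: measurable_set1.
  - by move=> y; rewrite /xsection /= inE => -[_] /eqP /= <-.
rewrite (_ : xsection _ _ = set0) ?measure0 //.
by apply/seteqP; split => // y; rewrite /xsection /= inE => -[[]].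
Qed.

End quadrant_integrals.

Section Q32_limit.
Variables (R : realType) (G : {finite_measure set R -> \bar R}).
Local Notation nonneg := (`[0%R, +oo[%classic : set R).
Local Notation pos := (`]0%R, +oo[%classic : set R).
Local Notation quadrant := (pos `*` pos).
Hypothesis G_atomless : forall x : R, 0 < x -> G [set x] = 0%E.
Hypothesis G_invsqrt_fin : (\int[G]_(x in pos) ((Num.sqrt x)^-1)%:E < +oo)%E.

Lemma Q32_rescale_cvg0 (psi : R -> R) (M : R) :
  measurable_fun nonneg psi -> (forall t, 0 <= t -> `|psi t| <= M) ->
  psi @ +oo --> 0 -> Q32 G (rescale psi e) @[e --> 0^'+] --> 0.
Proof.
move=> mpsi psiM psi0; apply/cvg_at_rightP => u [u_gt0 u_0].
pose f_ n p := (Lambda (rescale psi (u n)) p.1 p.2 / Num.sqrt (p.1 * p.2))%:E.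
have mf_ n : measurable_fun quadrant (f_ n).
  apply/measurable_EFinP/measurable_funM; last exact: measurable_fun_invsqrtM.
  exact: measurable_fun_Lambda (measurable_fun_rescale mpsi (u_gt0 n)).
have f_0 : {ae (G \x G)%E, forall p, quadrant p -> f_ ^~ p @ \oo --> 0%E}.
  exists (quadrant `&` [set p | p.1 == p.2]); split.
  - exact: measurable_diagonal (measurable_itv _).
  - apply: product_measure_diagonal; first exact: measurable_itv.
    by move=> x; rewrite /= in_itv /= andbT; exact: G_atomless.
  move=> p /= /not_implyP[Qp f_p]; split => //; apply: contrapT => /negP neq.
  apply: f_p; have [p1 p2] := quadrantP Qp.
  apply: cvg_EFin; first exact: nearW.
  rewrite -[X in _ --> X](mul0r (Num.sqrt (p.1 * p.2))^-1); apply: cvgMr_tmp.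
  have Lambda_0 := Lambda_rescale_cvg0 psi0 p1 p2 neq.
  exact: (cvg_at_rightP _ _ _).1 Lambda_0 _ (conj u_gt0 u_0).
have f_g : {ae (G \x G)%E, forall p n, quadrant p ->
    (`|f_ n p| <= (4 * M)%:E * ((Num.sqrt (p.1 * p.2))^-1)%:E)%E}.
  apply: aeW => p n /quadrantP[p1 p2].
  rewrite /f_ -EFinM lee_fin normrM normfV (ger0_norm (sqrtr_ge0 _)).
  apply: ler_wpM2r; first by rewrite invr_ge0 sqrtr_ge0.
  by apply: normr_Lambda_le (ltW p1) (ltW p2) => t; exact: normr_rescale_le.
have mQ := @measurable_quadrant R.
have [_ _ int_f_0] := dominated_convergence mQ mf_ (measurable_cst 0%E) f_0
  (integrableZl mQ (4 * M) (integrable_invsqrtM G_invsqrt_fin)) f_g.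
by rewrite integral0 in int_f_0; exact: fine_cvg.
Qed.

End Q32_limit.

Theorem mainTheorem17 (R : realType) (G : {finite_measure set R -> \bar R})
  (phi : R -> R) :
  G (`]-oo, 0%R[%classic : set R) = 0%E ->
  (forall x : R, 0 < x -> G [set x] = 0%E) ->
  (\int[G]_(x in (`]0%R, +oo[%classic : set R)) ((Num.sqrt x)^-1)%:E < +oo)%E ->
  admissible_profile phi ->
  (fun eps : R => Q32 G (rescale phi eps)) @ 0^'+ --> (0 : R).
Proof.
(* The mass of [G] on the negative half-line is irrelevant: [Q32] only
   integrates over the open quadrant. *)
move=> _ G_atomless G_invsqrt_fin [[[M phiM] [phi_cont _]] [_ [_ [_ phi_decay]]]].
apply: (Q32_rescale_cvg0 G_atomless G_invsqrt_fin _ phiM (cvgy0_of_sqrtrM phi_decay)).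
exact: subspace_continuous_measurable_fun (measurable_itv _) phi_cont.
Qed.
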